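(* Let $G=(V,E)$ be a strongly connected digraph with $V=\{v_1,\dots,v_n\}$. Then every evolution of the weight-balancing mirror algorithm, i.e., every sequence $(A_k)_{k\geq0}$ with $A_0\in\operatorname{Adj}(G)$ and $A_{k+1}\in g_{\mathrm{imcor}}(A_k)$ for all $k$ in which the choices satisfy the fair-decision rule, converges in finite time to a weight-balanced adjacency matrix: there exists $K$ such that $A_K$ is weight-balanced and $A_k=A_K$ for all $k\geq K$.
   Context: A digraph $G=(V,E)$ has finite vertex set $V$ and edge set $E\subseteq V\times V$; it is strongly connected if there is a directed path between every ordered pair of distinct vertices. $\mathcal{N}^{\mathrm{out}}(v_i)=\{v_j:(v_i,v_j)\in E\}$. $\operatorname{Adj}(G)$ is the set of matrices $A=(a_{ij})\in\mathbb{R}^{n\times n}_{\geq0}$ with $a_{ij}>0$ if $(v_i,v_j)\in E$ and $a_{ij}=0$ otherwise. For $A\in\operatorname{Adj}(G)$, the imbalance of $v_i$ is $\omega(v_i)=\sum_j a_{ji}-\sum_j a_{ij}$; $A$ is weight-balanced if all imbalances are zero. Let $\Omega_{\min}(v_i)=\{v_j\in\mathcal{N}^{\mathrm{out}}(v_i):\omega(v_j)=\min_{v_l\in\mathcal{N}^{\mathrm{out}}(v_i)}\omega(v_l)\}$. The map $g_{\mathrm{imcor}}:\operatorname{Adj}(G)\rightrightarrows\operatorname{Adj}(G)$ assigns to $A$ the set of all $B\in\operatorname{Adj}(G)$ such that for each $i$ there exists $j^*$ with $v_{j^*}\in\Omega_{\min}(v_i)$ and $b_{ij}=a_{ij}+\omega(v_i)$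 if $\omega(v_i)>0$ and $j=j^*$, $b_{ij}=a_{ij}$ otherwise (imbalances computed w.r.t. $A$). Fair-decision rule: when an agent with positive imbalance has more than one out-neighbor attaining the minimum imbalance, it chooses one of them, but the next time it must choose among out-neighbors with the same minimum imbalance it chooses a different (new) out-neighbor. *)

From HB Require Import structures.
From mathcomp Require Import all_boot all_order all_algebra.
From mathcomp Require Import reals.
Set Implicit Arguments. Unset Strict Implicit. Unset Printing Implicit Defensive.
Import Order.TTheory GRing.Theory Num.Theory.
Local Open Scope ring_scope.

(* A digraph on V = 'I_n is given by its edge relation E : rel 'I_n
   ((v_i,v_j) \in E  <->  E i j).  Self-loops are allowed. *)

Definition strongly_connected (n : nat) (E : rel 'I_n) : Prop :=
  forall i j : 'I_n, i != j -> connect E i j.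

Definition Nout (n : nat) (E : rel 'I_n) (i : 'I_n) : {set 'I_n} :=
  [set j | E i j].

Definition Adj (R : realType) (n : nat) (E : rel 'I_n) (A : 'M[R]_n) : Prop :=
  forall i j : 'I_n, (E i j -> 0 < A i j) /\ (~~ E i j -> A i j = 0).

Definition imbalance (R : realType) (n : nat) (A : 'M[R]_n) (i : 'I_n) : R :=
  \sum_(j < n) A j i - \sum_(j < n) A i j.

Definition weight_balanced (R : realType) (n : nat) (A : 'M[R]_n) : Prop :=
  forall i : 'I_n, imbalance A i = 0.

Definition Omega_min (R : realType) (n : nat) (E : rel 'I_n) (A : 'M[R]_n)
    (i : 'I_n) : {set 'I_n} :=
  [set j | E i j & [forall l, E i l ==> (imbalance A j <= imbalance A l)]].

(* B is the element of g_imcor(A) determined by the choice function c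
   (c i = j^* chosen by agent i). *)
Definition gimcor_with (R : realType) (n : nat) (E : rel 'I_n)
    (A : 'M[R]_n) (c : 'I_n -> 'I_n) (B : 'M[R]_n) : Prop :=
  Adj E B /\
  forall i : 'I_n, c i \in Omega_min E A i /\
    forall j : 'I_n,
      B i j = (if (0 < imbalance A i) && (j == c i)
               then A i j + imbalance A i else A i j).

Definition gimcor (R : realType) (n : nat) (E : rel 'I_n)
    (A B : 'M[R]_n) : Prop :=
  exists c : 'I_n -> 'I_n, gimcor_with E A c B.

(* Agent i "must choose" at time k among the tie set S = Omega_min(A_k, v_i)
   when imbalance A_k i > 0.  Considering the successive times at which agent i
   must choose among the same set S, the chosen out-neighbour is always a new
   one: it differs from each of the choices made at the previous (|S| - 1)
   occurrences of S (so choices cycle through S before any repetition).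
   When |S| = 1 the condition is vacuous. *)
Definition must_choose (R : realType) (n : nat) (E : rel 'I_n)
    (A : nat -> 'M[R]_n) (i : 'I_n) (S : {set 'I_n}) (t : nat) : bool :=
  (0 < imbalance (A t) i) && (Omega_min E (A t) i == S).

Definition fair_decision (R : realType) (n : nat) (E : rel 'I_n)
    (A : nat -> 'M[R]_n) (c : nat -> 'I_n -> 'I_n) : Prop :=
  forall (i : 'I_n) (k1 k2 : nat),
    (k1 < k2)%N ->
    let S := Omega_min E (A k1) i in
    must_choose E A i S k1 ->
    must_choose E A i S k2 ->
    (count (must_choose E A i S) (index_iota k1 k2) < #|S|)%N ->
    c k1 i != c k2 i.

(** The number of unbalanced vertices never increases, and
    strictly decreases whenever a surplus is pushed onto a vertex of negative
    imbalance; hence after some time [K0] this never happens again.  From then on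
    negative imbalances are frozen, and a vertex [v] with an out-neighbour [u] that
    is eventually nonpositive is itself eventually nonpositive: otherwise [u], having
    imbalance [0] and being a minimiser among the nonnegative out-neighbours of [v],
    would by fairness eventually be chosen by [v] and become positive.  If some
    vertex had negative imbalance at time [K0], strong connectivity would spread
    eventual nonpositivity from it to every vertex; as imbalances sum to zero they
    would eventually all vanish, contradicting the frozen negative one.  So [A K0] is
    balanced, and a balanced matrix is a fixed point of the update. *)
From HB Require Import structures.
From mathcomp Require Import all_boot all_order all_algebra.
From mathcomp Require Import reals.
From Stdlib Require Import Classical.
From mathcomp Require Import lra zify.
Set Implicit Arguments. Unset Strict Implicit. Unset Printing Implicit Defensive.
Import Order.TTheory GRing.Theory Num.Theory.

Definition eventually (P : nat -> Prop) := exists T, forall k, T <= k -> P k.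

Definition infinitely_often (P : nat -> Prop) := forall T, exists k, T <= k /\ P k.

Lemma eventually_or_infinitely_often (P : nat -> Prop) :
  eventually (fun k => ~ P k) \/ infinitely_often P.
Proof.
have [hio|hnio] := classic (infinitely_often P); first by right.
left; have [T hT] := not_all_ex_not _ _ hnio.
by exists T => k hk Pk; apply: hT; exists k.
Qed.

Lemma eventually_forall_fin (T : finType) (P : T -> nat -> Prop) :
  (forall x, eventually (P x)) -> eventually (fun k => forall x, P x k).
Proof.
move=> hP.
suff [B hB] : exists B, forall x k, x \in enum T -> B <= k -> P x k.
  by exists B => k hk x; apply: hB; rewrite ?mem_enum.
elim: (enum T) => [|y s [B hB]]; first by exists 0.
have [B' hB'] := hP y; exists (maxn B B') => x k; rewrite inE geq_max.
by case/orP=> [/eqP->|hx] /andP[hk hk']; [apply: hB'|apply: hB].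
Qed.

Lemma infinitely_often_pigeonhole (T : finType) (P : nat -> Prop) (f : nat -> T) :
  infinitely_often P -> exists x, infinitely_often (fun k => P k /\ f k = x).
Proof.
move=> hP; apply: NNPP => hnone.
have hev x : eventually (fun k => ~ (P k /\ f k = x)).
  have [//|hio] := eventually_or_infinitely_often (fun k => P k /\ f k = x).
  by case: hnone; exists x.
have [B hB] := eventually_forall_fin hev.
have [k [hk Pk]] := hP B.
exact: (hB k hk (f k)).
Qed.

Lemma nonincreasing_stabilizes (f : nat -> nat) :
  (forall k, f k.+1 <= f k) -> exists K, forall k, K <= k -> f k = f K.
Proof.
move=> hf.
have mono k d : f (k + d) <= f k.
  by elim: d => [|d IH]; rewrite ?addn0 // addnS (leq_trans (hf _) IH).
suff: forall m k, f k <= m -> exists K, forall k', K <= k' -> f k' = f K.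
  by move/(_ (f 0) 0 (leqnn _)).
elim=> [|m IH] k hk.
  by exists k => k' hk'; have := mono k (k' - k); rewrite subnKC //; lia.
have [hconst|hn] := classic (forall k', k <= k' -> f k' = f k); first by exists k.
have [k' hk'] := not_all_ex_not _ _ hn.
have [hkk' hne] := imply_to_and _ _ hk'.
by apply: (IH k'); have := mono k (k' - k); rewrite subnKC //; lia.
Qed.

Lemma count_index_iota_cat (P : pred nat) m p q :
  m <= p -> p <= q ->
  count P (index_iota m q) = count P (index_iota m p) + count P (index_iota p q).
Proof.
move=> hmp hpq; rewrite /index_iota -count_cat.
have -> : q - m = (p - m) + (q - p) by lia.
by rewrite iotaD subnKC.
Qed.

Lemma count_index_iota_lt (P : pred nat) m a b q :
  m <= a -> a <= b -> b < q -> P b ->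
  count P (index_iota a b) < count P (index_iota m q).
Proof.
move=> hma hab hbq Pb.
rewrite (count_index_iota_cat P hma (leq_trans hab (ltnW hbq))).
rewrite (count_index_iota_cat P hab (ltnW hbq)).
have : 0 < count P (index_iota b q).
  by rewrite -has_count; apply/hasP; exists b; rewrite // mem_index_iota leqnn.
lia.
Qed.

Lemma count_iota_attains (P : pred nat) m D k :
  k <= count P (iota m D) -> exists2 d, d <= D & count P (iota m d) = k.
Proof.
elim: D k => [|D IH] k hk; first by move: hk; rewrite leqn0 => /eqP ->; exists 0.
have [hle|hlt] := leqP k (count P (iota m D)).
  by have [d hd <-] := IH k hle; exists d; rewrite // ltnW.
exists D.+1 => //; move: hk hlt; rewrite -addn1 iotaD count_cat /=; lia.
Qed.

Lemma count_iota_unbounded (P : pred nat) m k :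
  infinitely_often P -> exists D, k <= count P (iota m D).
Proof.
move=> hP; elim: k => [|k [D hD]]; first by exists 0.
have [b [hb Pb]] := hP (m + D).
exists (b - m).+1; rewrite -[(b - m).+1]addn1 iotaD count_cat /= subnKC; last by lia.
have := count_index_iota_cat P (leq_addr D m) hb.
by rewrite /index_iota addKn Pb; lia.
Qed.

(* The fairness hypothesis only forbids repetitions within a window containing
   fewer than [#|S|] choice times; a window with exactly [#|S|] of them then
   exhibits [#|S|] distinct choices in [S], i.e. all of [S]. *)
Lemma fair_choices_cover (T : finType) (P : pred nat) (ch : nat -> T) (S : {set T}) :
  (forall k1 k2, k1 < k2 -> P k1 -> P k2 ->
     count P (index_iota k1 k2) < #|S| -> ch k1 != ch k2) ->
  (forall k, P k -> ch k \in S) ->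
  infinitely_often P ->
  forall u B, u \in S -> exists k, [/\ B <= k, P k & ch k = u].
Proof.
move=> hfair hS hP u B hu.
have [D hD] := count_iota_unbounded B #|S| hP.
have [d _ hd] := count_iota_attains hD.
pose L := filter P (iota B d).
have inL k : k \in L -> [/\ P k, B <= k & k < B + d].
  by rewrite mem_filter mem_iota => /andP[-> /andP[-> ->]].
have distinct a b : a \in L -> b \in L -> a < b -> ch a != ch b.
  move=> /inL[Pa ha _] /inL[Pb _ hb] hab; apply: hfair => //.
  rewrite -hd -[d in iota B d](addKn B d).
  exact: count_index_iota_lt ha (ltnW hab) hb Pb.
have uniqL : uniq (map ch L).
  rewrite map_inj_in_uniq ?filter_uniq ?iota_uniq // => a b ha hb e.
  case: (ltngtP a b) => // hab.
  - by move: (distinct a b ha hb hab); rewrite e eqxx.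
  - by move: (distinct b a hb ha hab); rewrite e eqxx.
have subS : {subset map ch L <= enum S}.
  by move=> x /mapP[k /inL[Pk _ _] ->]; rewrite mem_enum hS.
have sizeL : size (enum S) <= size (map ch L) by rewrite size_map /L size_filter hd cardE.
have [_ coverS] := uniq_min_size uniqL subS sizeL.
have /mapP[k /inL[Pk hk _] ->] : u \in map ch L by rewrite coverS mem_enum.
by exists k.
Qed.

Local Open Scope ring_scope.

Section OneStep.
Variables (R : realType) (n : nat) (E : rel 'I_n).

Lemma sum_imbalance (A : 'M[R]_n) : \sum_i imbalance A i = 0.
Proof. by rewrite /imbalance sumrB exchange_big subrr. Qed.

Lemma weight_balanced_nonneg (A : 'M[R]_n) :
  (forall i, 0 <= imbalance A i) -> weight_balanced A.
Proof. by move=> h i; apply: (psumr_eq0P (fun j _ => h j) (sum_imbalance A)). Qed.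

Lemma weight_balanced_nonpos (A : 'M[R]_n) :
  (forall i, imbalance A i <= 0) -> weight_balanced A.
Proof.
move=> h i; apply/eqP; rewrite -oppr_eq0; apply/eqP.
have h' j : true -> 0 <= - imbalance A j by rewrite oppr_ge0 h.
apply: (psumr_eq0P h') => //.
by rewrite (eq_bigr (fun j => - imbalance A j)) // sumrN sum_imbalance oppr0.
Qed.

(* The surplus of each positive agent leaves its row and enters the column of its
   chosen out-neighbour. *)
Lemma imbalance_gimcor (A B : 'M[R]_n) c j : gimcor_with E A c B ->
  imbalance B j = (if 0 < imbalance A j then 0 else imbalance A j) +
     \sum_(i | (0 < imbalance A i) && (j == c i)) imbalance A i.
Proof.
move=> [_ hB].
have col : \sum_i B i j = \sum_i A i j +
    \sum_(i | (0 < imbalance A i) && (j == c i)) imbalance A i.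
  rewrite [X in _ = _ + X]big_mkcond -big_split /=; apply: eq_bigr => i _.
  by rewrite (proj2 (hB i)); case: ifP; rewrite ?addr0.
have row : \sum_l B j l = \sum_l A j l +
    (if 0 < imbalance A j then imbalance A j else 0).
  rewrite (eq_bigr (fun l => A j l +
      (if (0 < imbalance A j) && (l == c j) then imbalance A j else 0))); last first.
    by move=> l _; rewrite (proj2 (hB j)); case: ifP; rewrite ?addr0.
  rewrite big_split /=; case: (0 < imbalance A j) => /=.
    by rewrite -big_mkcond big_pred1_eq.
  by rewrite big1_eq.
rewrite /imbalance col row -/(imbalance A j).
by case: ifP => _; rewrite /imbalance; lra.
Qed.

Lemma gimcor_imbalance_ge0 (A B : 'M[R]_n) c j : gimcor_with E A c B ->
  0 <= imbalance A j -> 0 <= imbalance B j.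
Proof.
move=> hAB hj; rewrite (imbalance_gimcor j hAB); apply: addr_ge0.
  by case: ifP.
by apply: sumr_ge0 => i /andP[/ltW].
Qed.

Lemma gimcor_imbalance_gt0 (A B : 'M[R]_n) c j : gimcor_with E A c B ->
  0 < imbalance B j -> exists2 i, 0 < imbalance A i & c i = j.
Proof.
move=> hAB; rewrite (imbalance_gimcor j hAB) => hj.
have hsum : \sum_(i | (0 < imbalance A i) && (j == c i)) imbalance A i != 0.
  by apply: contraTneq hj => ->; case: ifP => [_|/negbT]; rewrite addr0 -?leNgt ?ltxx.
have hge i : (0 < imbalance A i) && (j == c i) -> 0 <= imbalance A i.
  by case/andP=> /ltW.
have [i /andP[/andP[hi /eqP ->] _]] := psumr_neq0P hge (elimN eqP hsum).
by exists i.
Qed.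

Lemma gimcor_chosen_gt0 (A B : 'M[R]_n) c i : gimcor_with E A c B ->
  0 < imbalance A i -> 0 <= imbalance A (c i) -> 0 < imbalance B (c i).
Proof.
move=> hAB hi hci; rewrite (imbalance_gimcor (c i) hAB) (bigD1 i) ?hi ?eqxx //=.
rewrite addrCA; apply: (lt_le_trans hi); rewrite lerDl; apply: addr_ge0.
  by case: ifP.
by apply: sumr_ge0 => l /andP[/andP[/ltW]].
Qed.

Lemma gimcor_unchosen (A B : 'M[R]_n) c j : gimcor_with E A c B ->
  (forall i, 0 < imbalance A i -> c i != j) -> imbalance A j < 0 ->
  imbalance B j = imbalance A j.
Proof.
move=> hAB hc hj; rewrite (imbalance_gimcor j hAB) ifN -?leNgt ?ltW //.
rewrite big_pred0 ?addr0 // => i; apply/negbTE; rewrite negb_and.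
by case: ltP => //= /hc; rewrite eq_sym.
Qed.

Lemma gimcor_balanced (A B : 'M[R]_n) c : gimcor_with E A c B ->
  weight_balanced A -> B = A.
Proof.
by move=> [_ hB] hA; apply/matrixP => i j; rewrite (proj2 (hB i) j) hA ltxx.
Qed.

Definition surplus (A : 'M[R]_n) := [set i | 0 < imbalance A i].
Definition deficit (A : 'M[R]_n) := [set i | imbalance A i < 0].
Definition unbalanced_count (A : 'M[R]_n) := (#|surplus A| + #|deficit A|)%N.

Lemma surplus_gimcor (A B : 'M[R]_n) c : gimcor_with E A c B ->
  surplus B \subset c @: surplus A.
Proof.
move=> hAB; apply/subsetP => j; rewrite inE => /(gimcor_imbalance_gt0 hAB)[i hi <-].
by rewrite imset_f ?inE.
Qed.

Lemma deficit_gimcor (A B : 'M[R]_n) c : gimcor_with E A c B ->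
  deficit B \subset deficit A.
Proof.
move=> hAB; apply/subsetP => j; rewrite !inE; apply: contraLR; rewrite -!leNgt.
exact: gimcor_imbalance_ge0 hAB.
Qed.

Lemma unbalanced_count_gimcor (A B : 'M[R]_n) c : gimcor_with E A c B ->
  (unbalanced_count B <= unbalanced_count A)%N.
Proof.
move=> hAB; apply: leq_add; last exact/subset_leq_card/(deficit_gimcor hAB).
exact: leq_trans (subset_leq_card (surplus_gimcor hAB)) (leq_imset_card _ _).
Qed.

(* If [c i] becomes positive the deficit set shrinks; otherwise [c i] is an
   image of the surplus set that does not lie in the new surplus set. *)
Lemma unbalanced_count_gimcor_lt (A B : 'M[R]_n) c i : gimcor_with E A c B ->
  0 < imbalance A i -> imbalance A (c i) < 0 ->
  (unbalanced_count B < unbalanced_count A)%N.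
Proof.
move=> hAB hi hci; rewrite /unbalanced_count.
have hS := leq_trans (subset_leq_card (surplus_gimcor hAB)) (leq_imset_card c (surplus A)).
have hD := subset_leq_card (deficit_gimcor hAB).
have [hBci|hBci] := ltP 0 (imbalance B (c i)).
  have /proper_card : deficit B \proper deficit A.
    rewrite properE (deficit_gimcor hAB) /=; apply/subsetPn; exists (c i); rewrite !inE //.
    by rewrite -leNgt ltW.
  lia.
have /subset_leq_card : surplus B \subset (c @: surplus A) :\ c i.
  apply/subsetP => j hj; rewrite !inE (subsetP (surplus_gimcor hAB)) // andbT.
  by apply: contraTneq hj => ->; rewrite inE -leNgt.
have := cardsD1 (c i) (c @: surplus A); rewrite imset_f ?inE //.
have := leq_imset_card c (surplus A); lia.
Qed.

End OneStep.

Section StableRegime.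
Variables (R : realType) (n : nat) (E : rel 'I_n).
Variables (A : nat -> 'M[R]_n) (c : nat -> 'I_n -> 'I_n) (K0 : nat).
Hypothesis gimcor_step : forall k, gimcor_with E (A k) (c k) (A k.+1).
Hypothesis stable :
  forall k, (K0 <= k)%N -> unbalanced_count (A k) = unbalanced_count (A K0).

Lemma stable_choice_ge0 k i : (K0 <= k)%N ->
  0 < imbalance (A k) i -> 0 <= imbalance (A k) (c k i).
Proof.
move=> hk hi; rewrite leNgt; apply/negP => hci.
have := unbalanced_count_gimcor_lt (gimcor_step k) hi hci.
by rewrite stable ?stable ?(leqW hk) // ltnn.
Qed.

Lemma stable_out_neighbour_ge0 k v l : (K0 <= k)%N ->
  0 < imbalance (A k) v -> E v l -> 0 <= imbalance (A k) l.
Proof.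
move=> hk hv hvl; apply: le_trans (stable_choice_ge0 hk hv) _.
have := proj1 (proj2 (gimcor_step k) v); rewrite inE => /andP[_ /forallP/(_ l)].
by rewrite hvl.
Qed.

Lemma stable_deficit_frozen z k : imbalance (A K0) z < 0 -> (K0 <= k)%N ->
  imbalance (A k) z = imbalance (A K0) z.
Proof.
move=> hz; elim: k => [|k IH]; first by rewrite leqn0 => /eqP->.
rewrite leq_eqVlt ltnS => /orP[/eqP<- //|hk].
have hzk := IH hk.
rewrite (gimcor_unchosen (gimcor_step k)) ?hzk // => i hi.
by apply: contraTneq (stable_choice_ge0 hk hi) => ->; rewrite -ltNge hzk.
Qed.

Hypothesis fair : fair_decision E A c.

Let eventually_nonpos v := eventually (fun k => imbalance (A k) v <= 0).

Lemma eventually_nonpos_of_out_neighbour v u : E v u -> eventually_nonpos u -> eventually_nonpos v.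
Proof.
move=> hvu [T hT]; pose T1 := maxn T K0.
have never_chosen k : (T1 <= k)%N -> 0 < imbalance (A k) v ->
    u \in Omega_min E (A k) v /\ c k v != u.
  rewrite geq_max => /andP[hkT hkK] hv.
  have hu0 : imbalance (A k) u = 0.
    by apply/eqP; rewrite eq_le hT // (stable_out_neighbour_ge0 hkK hv hvu).
  split.
    rewrite inE hvu /=; apply/forallP => l; apply/implyP => hvl.
    by rewrite hu0 (stable_out_neighbour_ge0 hkK hv hvl).
  apply/eqP => hcu; have := hT _ (leqW hkT); apply/negP; rewrite -ltNge -hcu.
  by apply: gimcor_chosen_gt0 (gimcor_step k) hv _; rewrite hcu hu0.
have [[T' hT']|hio] :=
  eventually_or_infinitely_often (fun k => 0 < imbalance (A k) v).
  by exists T' => k /hT' /negP; rewrite -leNgt.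
have [S hS] := infinitely_often_pigeonhole (fun k => Omega_min E (A k) v) hio.
have hmust : infinitely_often (must_choose E A v S).
  by move=> B; have [k [hk [hv hSk]]] := hS B; exists k; rewrite /must_choose hv hSk eqxx.
have huS : u \in S.
  by have [k [hk [hv <-]]] := hS T1; case: (never_chosen k hk hv).
have hfair k1 k2 : (k1 < k2)%N -> must_choose E A v S k1 -> must_choose E A v S k2 ->
    (count (must_choose E A v S) (index_iota k1 k2) < #|S|)%N -> c k1 v != c k2 v.
  by move=> hk12 hk1; have /= := fair (i:=v) hk12; case/andP: (hk1) => _ /eqP ->; apply.
have hchoice k : must_choose E A v S k -> c k v \in S.
  by case/andP=> _ /eqP <-; apply: (proj1 (proj2 (gimcor_step k) v)).
have [k [hk /andP[hv _] hcu]] := fair_choices_cover hfair hchoice hmust T1 huS.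
by have [_] := never_chosen k hk hv; rewrite hcu eqxx.
Qed.

Lemma stable_weight_balanced : strongly_connected E -> weight_balanced (A K0).
Proof.
move=> hE.
have [[z hz]|hnone] := classic (exists z, imbalance (A K0) z < 0); last first.
  by apply: weight_balanced_nonneg => i; rewrite leNgt; apply/negP => hi; apply: hnone; exists i.
have nonpos_z : eventually_nonpos z.
  by exists K0 => k hk; rewrite stable_deficit_frozen // ltW.
have nonpos_all v : eventually_nonpos v.
  have [->|hvz] := eqVneq v z; first exact: nonpos_z.
  have /connectP[p hp hzp] := hE v z hvz.
  elim: p v hp hzp {hvz} => [|x p IH] v /=; first by move=> _ <-.
  by case/andP=> hvx hp hzp; apply: eventually_nonpos_of_out_neighbour hvx (IH x hp hzp).
have [B hB] := eventually_forall_fin nonpos_all.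
have := weight_balanced_nonpos (hB _ (leq_maxl B K0)) z.
by rewrite stable_deficit_frozen ?leq_maxr // => hz0; rewrite hz0 ltxx in hz.
Qed.

End StableRegime.

Theorem theorem4p7 (R : realType) (n : nat) (E : rel 'I_n)
    (A : nat -> 'M[R]_n) (c : nat -> 'I_n -> 'I_n) :
  strongly_connected E ->
  Adj E (A 0%N) ->
  (forall k : nat, gimcor_with E (A k) (c k) (A k.+1)) ->
  fair_decision E A c ->
  exists K : nat, weight_balanced (A K) /\ (forall k : nat, (K <= k)%N -> A k = A K).
Proof.
move=> hE _ hstep hfair.
have [K0 hK0] := nonincreasing_stabilizes (fun k => unbalanced_count_gimcor (hstep k)).
have hbal := stable_weight_balanced hstep hK0 hfair hE.
exists K0; split => // k /subnKC <-.
by elim: (k - K0)%N => [|d IH]; rewrite ?addn0 // addnS (gimcor_balanced (hstep _)) IH.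
Qed.
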